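(* Let $l$ be a prime, $\tilde\chi$ a Dirichlet character modulo $l$ with associated character $\chi$, and $f\in S_2^k(\Gamma_0^{(2)}(l),\chi)$. Let $s$ be a symmetric positive definite integral $2\times2$ matrix with $l'=\det(s)$, and let $\hat l$ be an integer with $l\hat l\equiv 1\pmod{l'}$. Let $W_{l'}=\begin{pmatrix}l'&-\hat l\\ ll'&1-l\hat l\end{pmatrix}$. Then \[\phi_s^*(f)\,|\,W_{l'}=\chi\bigl(\det((1-l\hat l)s^{-1})\bigr)\,\phi_s^*f.\]
   Context: $\Gamma_0^{(2)}(l)=\{\begin{pmatrix}A&B\\C&D\end{pmatrix}\in \mathrm{Sp}_4(\mathbb{Z}) : C\equiv 0 \pmod l\}$; for $M=\begin{pmatrix}A&B\\C&D\end{pmatrix}$, $F|_kM(Z)=\det(CZ+D)^{-k}F((AZ+B)(CZ+D)^{-1})$ on the genus 2 Siegel upper half space; $\chi(M)=\tilde\chi(\det D)$, and for an integer $n$ (here $\det((1-l\hat l)s^{-1})=(1-l\hat l)^2/l'$, an integer) $\chi(n)=\tilde\chi(n)$. $S_2^k(\Gamma_0^{(2)}(l),\chi)$ is the space of Siegel cusp forms of degree 2, weight $k$ with $f|_kM=\chi(M)f$ for all $M\in\Gamma_0^{(2)}(l)$. The restriction is $\phi_s^*(f)(\tau)=f(s\tau)$, an elliptic cusp form of weight $2k$ and level $ll'$. For $\gamma=\begin{pmatrix}a&b\\c&d\end{pmatrix}\in\mathrm{GL}_2^+(\mathbb{Q})$, $(g|\gamma)(\tau)=\det(\gamma)^k(c\tau+d)^{-2k}g(\gamma\tau)$.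 *)

From HB Require Import structures.
From mathcomp Require Import all_boot all_order all_algebra.
From mathcomp Require Import all_classical all_reals all_analysis.
From mathcomp Require Import Rstruct Rstruct_topology.
From mathcomp Require Import complex.
Set Implicit Arguments. Unset Strict Implicit. Unset Printing Implicit Defensive.
Import Order.TTheory GRing.Theory Num.Theory ComplexField.
Import numFieldNormedType.Exports.
Local Open Scope ring_scope.
Local Open Scope classical_set_scope.

Definition RR := Rdefinitions.R.
Notation C := (complex RR).

Definition CRe (z : C) : RR := complex.Re z.
Definition CIm (z : C) : RR := complex.Im z.
Definition Ci : C := (0%R +i* 1%R)%C.
Definition intC (z : int) : C := z%:~R.
Definition intmxC m n (M : 'M[int]_(m, n)) : 'M[C]_(m, n) := map_mx intC M.

Definition H1 (tau : C) : Prop := 0 < CIm tau.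

Definition posdefR (Y : 'M[RR]_2) : Prop :=
  Y^T = Y /\ forall x : 'rV[RR]_2, x != 0 -> 0 < (x *m Y *m x^T) 0 0.

Definition H2 (Z : 'M[C]_2) : Prop := Z^T = Z /\ posdefR (map_mx CIm Z).

Definition Jmx : 'M[int]_(2 + 2) := block_mx 0 1%:M (- 1%:M) 0.
Definition Sp4Z (M : 'M[int]_(2 + 2)) : Prop := M^T *m Jmx *m M = Jmx.
Definition blkA (M : 'M[int]_(2 + 2)) : 'M[int]_2 := ulsubmx M.
Definition blkB (M : 'M[int]_(2 + 2)) : 'M[int]_2 := ursubmx M.
Definition blkC (M : 'M[int]_(2 + 2)) : 'M[int]_2 := dlsubmx M.
Definition blkD (M : 'M[int]_(2 + 2)) : 'M[int]_2 := drsubmx M.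

Definition Gamma0_2 (l : nat) (M : 'M[int]_(2 + 2)) : Prop :=
  Sp4Z M /\ forall i j, (l%:Z %| blkC M i j)%Z.

Definition slash2 (k : nat) (F : 'M[C]_2 -> C) (M : 'M[int]_(2 + 2))
    (Z : 'M[C]_2) : C :=
  let A := intmxC (blkA M) in let B := intmxC (blkB M) in
  let Cc := intmxC (blkC M) in let D := intmxC (blkD M) in
  let N := Cc *m Z + D in
  (\det N ^+ k)^-1 * F ((A *m Z + B) *m invmx N).

Definition dirichlet_char (l : nat) (chi : int -> C) : Prop :=
  [/\ (forall m n : int, chi (m * n) = chi m * chi n),
      (forall n : int, chi (n + l%:Z) = chi n),
      chi 1 = 1 &
      (forall n : int, chi n = 0 <-> ~~ coprimez n l%:Z)].

Definition chiM (chi : int -> C) (M : 'M[int]_(2 + 2)) : C := chi (\det (blkD M)).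

Definition symmx (v : C * C * C) : 'M[C]_2 :=
  \matrix_(i < 2, j < 2)
    (if (i == 0%N :> nat) && (j == 0%N :> nat) then v.1.1
     else if (i == 1%N :> nat) && (j == 1%N :> nat) then v.2 else v.1.2).

(* holomorphy on H2, as a function of the three coordinates z1, z2, z3
   (complex Frechet differentiability over C) *)
Definition holomorphic_H2 (F : 'M[C]_2 -> C) : Prop :=
  forall v : C^o * C^o * C^o, H2 (symmx v) ->
    differentiable ((F \o symmx) : C^o * C^o * C^o -> C^o) v.

Definition diag2 (a b : C) : 'M[C]_2 :=
  \matrix_(i < 2, j < 2)
    (if i == j then (if (i == 0%N :> nat) then a else b) else 0).

(* cusp condition: Siegel Phi operator kills F|_k M for every M in Sp_4(Z):
   lim_{t -> +oo} (F|_k M)(diag(tau, i t)) = 0 for every tau in H1 *)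
Definition cuspidal2 (k : nat) (F : 'M[C]_2 -> C) : Prop :=
  forall M, Sp4Z M -> forall tau : C, H1 tau ->
    ((fun t : RR => slash2 k F M (diag2 tau (Ci * (t%:C)%C))) : RR -> C^o) @ +oo --> (0 : C^o).

Definition siegel_cusp_form (k l : nat) (chi : int -> C) (F : 'M[C]_2 -> C) : Prop :=
  [/\ holomorphic_H2 F,
      (forall M, Gamma0_2 l M -> forall Z, H2 Z -> slash2 k F M Z = chiM chi M * F Z)
    & cuspidal2 k F].

Definition restr (s : 'M[int]_2) (F : 'M[C]_2 -> C) (tau : C) : C :=
  F (tau *: intmxC s).

(* elliptic slash of weight 2k: (g|gamma)(tau) = det(gamma)^k (c tau + d)^(-2k) g(gamma tau) *)
Definition slash1 (k : nat) (g : C -> C) (gam : 'M[int]_2) (tau : C) : C :=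
  let a := intC (gam 0 0) in let b := intC (gam 0 1) in
  let c := intC (gam 1 0) in let d := intC (gam 1 1) in
  intC (\det gam) ^+ k * ((c * tau + d) ^+ (2 * k))^-1 * g ((a * tau + b) / (c * tau + d)).

Definition Wmx (l l' lh : int) : 'M[int]_2 :=
  \matrix_(i < 2, j < 2)
    (if (i == 0%N :> nat) then (if (j == 0%N :> nat) then l' else - lh)
     else (if (j == 0%N :> nat) then l * l' else 1 - l * lh)).

Definition posdefZ (s : 'M[int]_2) : Prop := posdefR (map_mx (fun z : int => (z%:~R : RR)) s).

(* Write l' = det s and 1 - l lh = q l'.  With J = [[0,1],[-1,0]], the integral
   block matrix M = [[s J, -lh J], [l J, q J s]] lies in Gamma_0^(2)(l): since
   s J s = l' J for symmetric s, its symplecticity reduces to q l' + l lh = 1.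
   At Z = tau s one finds C Z + D = (l tau + q) J s and A Z + B = (l' tau - lh) J,
   so that M<tau s> = (W_{l'} tau) s and det (C Z + D) = (l tau + q)^2 l'.  Hence the
   transformation law of f under M, whose character value is chi(det D) =
   chi(q^2 l'), is exactly the transformation law of phi_s^* f under W_{l'}. *)

From HB Require Import structures.
From mathcomp Require Import all_boot all_order all_algebra.
From mathcomp Require Import all_classical all_reals all_analysis.
From mathcomp Require Import Rstruct Rstruct_topology complex.
From mathcomp Require Import ring.
Import Order.TTheory GRing.Theory Num.Theory.
Set Implicit Arguments. Unset Strict Implicit. Unset Printing Implicit Defensive.
Local Open Scope ring_scope.

Lemma ord2_ind (P : 'I_2 -> Prop) : P 0 -> P 1 -> forall i, P i.
Proof.
move=> P0 P1 [[|[|i]] Hi] //.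
- by have -> : Ordinal Hi = 0 by apply: val_inj.
- by have -> : Ordinal Hi = 1 by apply: val_inj.
Qed.

Ltac mx2_entrywise := apply/matrixP; apply: ord2_ind; apply: ord2_ind; rewrite !mxE.

Section Mx2.
Variable R : comNzRingType.

Definition mx2 (a b c d : R) : 'M[R]_2 :=
  \matrix_(i < 2, j < 2)
    (if (i == 0%N :> nat) then (if (j == 0%N :> nat) then a else b)
     else (if (j == 0%N :> nat) then c else d)).

Definition row2 (a b : R) : 'rV[R]_2 :=
  \row_(j < 2) (if (j == 0%N :> nat) then a else b).

Definition J2 : 'M[R]_2 := mx2 0 1 (-1) 0.

Lemma mx2E (M : 'M[R]_2) : M = mx2 (M 0 0) (M 0 1) (M 1 0) (M 1 1).
Proof. by mx2_entrywise. Qed.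

Lemma sym_mx2E (M : 'M[R]_2) : M^T = M -> M = mx2 (M 0 0) (M 0 1) (M 0 1) (M 1 1).
Proof. by move=> MT; rewrite {1}(mx2E M); congr mx2; rewrite -{1}MT mxE. Qed.

Lemma mulmx2 a b c d a' b' c' d' :
  mx2 a b c d *m mx2 a' b' c' d' =
  mx2 (a * a' + b * c') (a * b' + b * d') (c * a' + d * c') (c * b' + d * d').
Proof. by mx2_entrywise; rewrite !big_ord_recr big_ord0 /= !mxE /= add0r. Qed.

Lemma addmx2 a b c d a' b' c' d' :
  mx2 a b c d + mx2 a' b' c' d' = mx2 (a + a') (b + b') (c + c') (d + d').
Proof. by mx2_entrywise. Qed.

Lemma oppmx2 a b c d : - mx2 a b c d = mx2 (- a) (- b) (- c) (- d).
Proof. by mx2_entrywise. Qed.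

Lemma scalemx2 x a b c d : x *: mx2 a b c d = mx2 (x * a) (x * b) (x * c) (x * d).
Proof. by mx2_entrywise. Qed.

Lemma trmx2 a b c d : (mx2 a b c d)^T = mx2 a c b d.
Proof. by mx2_entrywise. Qed.

Lemma scalar_mx2 x : x%:M = mx2 x 0 0 x.
Proof. by mx2_entrywise. Qed.

Lemma det_mx2 a b c d : \det (mx2 a b c d) = a * d - b * c.
Proof.
rewrite (expand_det_row _ 0) !big_ord_recr big_ord0 /= add0r.
rewrite /cofactor !mxE /= !(expand_det_row _ 0) !big_ord_recr !big_ord0 /=.
by rewrite /cofactor !det_mx00 !mxE /=; ring.
Qed.

Lemma mx2_quad a b p q r t :
  (row2 a b *m mx2 p q r t *m (row2 a b)^T) 0 0 =
  a * (a * p + b * r) + b * (a * q + b * t).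
Proof.
rewrite !mxE !big_ord_recr !big_ord0 /= !mxE !big_ord_recr !big_ord0 /= !mxE /=.
by ring.
Qed.

Lemma row2_neq0 a b : (a != 0) || (b != 0) -> row2 a b != 0.
Proof.
apply: contraTN => /eqP/matrixP E.
by have := E 0 0; have := E 0 1; rewrite !mxE /= => -> ->; rewrite eqxx.
Qed.

Lemma det_J2 : \det J2 = 1.
Proof. by rewrite /J2 det_mx2; ring. Qed.

Lemma mulmx_J2_tr (A : 'M[R]_2) : A *m J2 *m A^T = \det A *: J2.
Proof.
rewrite (mx2E A) det_mx2 trmx2 /J2 !mulmx2 scalemx2.
by congr mx2; ring.
Qed.

End Mx2.

Arguments J2 {R}.

Lemma map_mx2 (R S : comNzRingType) (f : R -> S) a b c d :
  map_mx f (mx2 a b c d) = mx2 (f a) (f b) (f c) (f d).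
Proof. by mx2_entrywise. Qed.

Lemma map_J2 (R S : comNzRingType) (f : {rmorphism R -> S}) : map_mx f J2 = J2.
Proof. by rewrite map_mx2 rmorph0 rmorph1 rmorphN1. Qed.

Lemma posdefR_det_gt0 (Y : 'M[RR]_2) : posdefR Y -> 0 < \det Y.
Proof.
case=> YT; rewrite (sym_mx2E YT) det_mx2.
set a := Y 0 0; set b := Y 0 1; set c := Y 1 1 => pos.
have a_gt0 : 0 < a.
  have /pos : row2 (1 : RR) 0 != 0 by apply: row2_neq0; rewrite oner_neq0.
  by rewrite mx2_quad !mul1r !mul0r !addr0.
have /pos : row2 b (- a) != 0 by apply: row2_neq0; rewrite oppr_eq0 (gt_eqF a_gt0) orbT.
rewrite mx2_quad.
have -> : b * (b * a + - a * b) + - a * (b * b + - a * c) = a * (a * c - b * b) by ring.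
by rewrite pmulr_rgt0.
Qed.

Lemma posdefZ_det_gt0 (s : 'M[int]_2) : posdefZ s -> 0 < \det s.
Proof. by move=> /posdefR_det_gt0; rewrite det_map_mx ltr0z. Qed.

Lemma posdefRZ (c : RR) (Y : 'M[RR]_2) : 0 < c -> posdefR Y -> posdefR (c *: Y).
Proof.
move=> c_gt0 [YT pos]; split; first by rewrite linearZ /= YT.
by move=> x /pos x_pos; rewrite -scalemxAr -scalemxAl mxE; apply: mulr_gt0.
Qed.

HB.instance Definition _ := GRing.RMorphism.copy intC ( *~%R (1 : C)).

Lemma intC_real (z : int) : intC z = ((z%:~R : RR)%:C)%C.
Proof. by rewrite /intC rmorph_int. Qed.

Lemma CIm_mulr_intC (t : C) (z : int) : CIm (t * intC z) = CIm t * z%:~R.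
Proof. by rewrite intC_real; case: t => a b; rewrite /CIm /= mulr0 add0r. Qed.

Lemma CIm_affine (a b : int) (t : C) : CIm (intC a * t + intC b) = a%:~R * CIm t.
Proof. by rewrite !intC_real; case: t => x y; rewrite /CIm /=; ring. Qed.

Lemma H1_affine_neq0 (a b : int) (tau : C) :
  H1 tau -> a != 0 -> intC a * tau + intC b != 0.
Proof.
move=> tau_H a_neq0; apply/eqP => /(congr1 CIm); rewrite CIm_affine => /eqP.
by rewrite mulf_eq0 intr_eq0 (negPf a_neq0) gt_eqF.
Qed.

Lemma H2_scale (tau : C) (s : 'M[int]_2) :
  H1 tau -> s^T = s -> posdefZ s -> H2 (tau *: intmxC s).
Proof.
move=> tau_H sT s_pd; split; first by rewrite linearZ /= /intmxC map_trmx sT.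
have -> : map_mx CIm (tau *: intmxC s) = CIm tau *: map_mx (fun z : int => z%:~R) s.
  by apply/matrixP => i j; rewrite !mxE CIm_mulr_intC.
exact: posdefRZ.
Qed.

Lemma Sp4Z_block (A B C D : 'M[int]_2) :
  A^T *m C = C^T *m A -> B^T *m D = D^T *m B -> A^T *m D - C^T *m B = 1%:M ->
  Sp4Z (block_mx A B C D).
Proof.
move=> AC BD ADCB; rewrite /Sp4Z /Jmx tr_block_mx !mulmx_block.
rewrite !(mul0mx, mulmx0, mul1mx, mulmx1, mulNmx, mulmxN, add0r, addr0).
congr block_mx; rewrite ?AC ?BD ?addNr // addrC ?ADCB //.
by rewrite -[1%:M]trmx1 -ADCB linearB /= !trmx_mul !trmxK opprB.
Qed.

Definition Wmx_lift (s : 'M[int]_2) (l lh q : int) : 'M[int]_(2 + 2) :=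
  block_mx (s *m J2) (- lh *: J2) (l *: J2) (q *: (J2 *m s)).

Lemma Wmx_lift_Gamma0 (l : nat) (lh q : int) (s : 'M[int]_2) :
  s^T = s -> q * \det s + l%:Z * lh = 1 -> Gamma0_2 l (Wmx_lift s l%:Z lh q).
Proof.
move=> sT hq; split; last first.
  by move=> i j; rewrite /blkC block_mxKdl mxE dvdz_mulr.
(* Rewriting 1 as q l' + l lh turns the third block condition into a ring identity. *)
apply: Sp4Z_block; rewrite -?hq (sym_mx2E sT) ?det_mx2 /J2
  !(trmx2, mulmx2, scalemx2, oppmx2, addmx2, scalar_mx2);
  by congr mx2; ring.
Qed.

Lemma det_blkD_Wmx_lift (s : 'M[int]_2) (l lh q : int) :
  \det (blkD (Wmx_lift s l lh q)) = q ^+ 2 * \det s.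
Proof. by rewrite /blkD block_mxKdr detZ det_mulmx det_J2 mul1r. Qed.

Section Wmx_lift_action.
Variables (s : 'M[int]_2) (l lh q : int) (tau : C).
Hypothesis sT : s^T = s.
Local Notation S := (intmxC s).
Local Notation u := (intC l * tau + intC q).
Local Notation M := (Wmx_lift s l lh q).

Lemma intmxC_sym_J2 : S *m J2 *m S = intC (\det s) *: J2.
Proof.
have ST : S^T = S by rewrite /intmxC map_trmx sT.
by rewrite -{2}ST mulmx_J2_tr det_map_mx.
Qed.

Lemma Wmx_lift_numer :
  intmxC (blkA M) *m (tau *: S) + intmxC (blkB M) = (intC (\det s) * tau - intC lh) *: J2.
Proof.
rewrite /blkA /blkB block_mxKul block_mxKur /intmxC map_mxM !map_mxZ map_J2.
by rewrite -scalemxAr intmxC_sym_J2 scalerA -scalerDl rmorphN mulrC.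
Qed.

Lemma Wmx_lift_denom :
  intmxC (blkC M) *m (tau *: S) + intmxC (blkD M) = u *: (J2 *m S).
Proof.
rewrite /blkC /blkD block_mxKdl block_mxKdr /intmxC !map_mxZ map_mxM map_J2.
by rewrite -scalemxAl -scalemxAr scalerA -scalerDl.
Qed.

Lemma slash2_Wmx_lift k f : \det s != 0 -> u != 0 ->
  slash2 k f M (tau *: S) =
  ((u ^+ 2 * intC (\det s)) ^+ k)^-1 *
  f ((intC (\det s) * tau - intC lh) / (intC (\det s) * u) *: S).
Proof.
move=> det_neq0 u_neq0; have detC_neq0 : intC (\det s) != 0 by rewrite intr_eq0.
have det_denom : \det (u *: (J2 *m S)) = u ^+ 2 * intC (\det s).
  by rewrite detZ det_mulmx det_J2 mul1r det_map_mx.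
rewrite /slash2 Wmx_lift_numer Wmx_lift_denom det_denom; congr (_ * f _).
have denom_unit : u *: (J2 *m S) \in unitmx.
  by rewrite unitmxE det_denom unitfE mulf_neq0 ?expf_neq0.
set w := (_ / _); rewrite -[X in X *m _](_ : (w *: S) *m (u *: (J2 *m S)) = _).
  by rewrite mulmxK.
rewrite -scalemxAr -scalemxAl scalerA mulmxA intmxC_sym_J2 scalerA.
by congr (_ *: J2); rewrite /w; field; rewrite detC_neq0 u_neq0.
Qed.

End Wmx_lift_action.

Lemma slash1_Wmx k (g : C -> C) (l l' lh q : int) (tau : C) :
  1 - l * lh = q * l' ->
  slash1 k g (Wmx l l' lh) tau =
  intC l' ^+ k * ((intC l' * (intC l * tau + intC q)) ^+ (2 * k))^-1 *
  g ((intC l' * tau - intC lh) / (intC l' * (intC l * tau + intC q))).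
Proof.
move=> hq; rewrite /slash1 (_ : Wmx l l' lh = mx2 l' (- lh) (l * l') (1 - l * lh)) //.
rewrite det_mx2 !mxE /= (_ : l' * (1 - l * lh) - - lh * (l * l') = l'); last by ring.
rewrite hq (_ : intC (l * l') * tau + intC (q * l') = intC l' * (intC l * tau + intC q)).
  by rewrite rmorphN.
by rewrite !rmorphM; ring.
Qed.

Theorem proposition4p4 (l k : nat) (chi : int -> C) (f : 'M[C]_2 -> C)
    (s : 'M[int]_2) (lh : int) :
  prime l -> dirichlet_char l chi -> siegel_cusp_form k l chi f ->
  s^T = s -> posdefZ s ->
  ((l%:Z * lh)%R = 1 %[mod \det s])%Z ->
  forall tau : C, H1 tau ->
    slash1 k (restr s f) (Wmx l%:Z (\det s) lh) tau
    = chi (((1 - l%:Z * lh) ^+ 2) %/ \det s)%Z * restr s f tau.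
Proof.
move=> l_prime _ [_ f_mod _] sT s_pd l_lh tau tau_H.
have det_neq0 : \det s != 0 by rewrite gt_eqF ?posdefZ_det_gt0.
have detC_neq0 : intC (\det s) != 0 by rewrite intr_eq0.
have [q hq] : exists q, 1 - l%:Z * lh = q * \det s.
  by apply/dvdzP; rewrite -opprB rpredN -eqz_mod_dvd; apply/eqP.
have u_neq0 : intC l%:Z * tau + intC q != 0.
  by apply: H1_affine_neq0; rewrite // eqz_nat -lt0n prime_gt0.
have lift_Gamma0 : Gamma0_2 l (Wmx_lift s l%:Z lh q).
  by apply: Wmx_lift_Gamma0; rewrite // -hq subrK.
have chi_arg : ((1 - l%:Z * lh) ^+ 2 %/ \det s)%Z = q ^+ 2 * \det s.
  by rewrite hq (_ : (q * \det s) ^+ 2 = q ^+ 2 * \det s * \det s) ?mulzK //; ring.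
have := f_mod _ lift_Gamma0 _ (H2_scale tau_H sT s_pd).
rewrite /chiM det_blkD_Wmx_lift slash2_Wmx_lift // => f_lift.
rewrite (slash1_Wmx _ _ _ hq) /restr chi_arg -f_lift; congr (_ * _).
set u := intC l%:Z * tau + intC q.
rewrite exprM (_ : (intC (\det s) * u) ^+ 2 = intC (\det s) * (u ^+ 2 * intC (\det s)));
  last by ring.
by rewrite exprMn invfM mulrA mulfV ?mul1r // expf_neq0.
Qed.
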